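(* For all positive integers $n$, \[ \sum_{k=0}^{n} (-1)^k D(n-k,k) = \begin{cases} 0, &\text{if $n$ is odd,} \\ -1, &\text{if $n \equiv 2 \pmod{4}$,} \\ 1, &\text{if $n \equiv 0 \pmod{4}$.} \end{cases} \]
   Context: For non-negative integers $m,n$, the Delannoy number $D(m,n)$ is the number of lattice paths from $(0,0)$ to $(m,n)$ using only steps from $(i,j)$ to $(i+1,j)$, $(i,j+1)$ or $(i+1,j+1)$. *)

From HB Require Import structures.
From mathcomp Require Import all_boot all_algebra.
Set Implicit Arguments. Unset Strict Implicit. Unset Printing Implicit Defensive.

Inductive step := East | North | Diag.

Definition step_dx (s : step) : nat := match s with East | Diag => 1 | North => 0 end.
Definition step_dy (s : step) : nat := match s with North | Diag => 1 | East => 0 end.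

Definition step_code (s : step) : 'I_3 :=
  match s with East => inord 0 | North => inord 1 | Diag => inord 2 end.
Definition step_decode (i : 'I_3) : step :=
  match val i with 0 => East | 1 => North | _ => Diag end.
Lemma step_codeK : cancel step_code step_decode.
Proof. by case; rewrite /step_decode /= inordK. Qed.
HB.instance Definition _ := Finite.copy step (can_type step_codeK).

Definition ends_at (m n : nat) (p : seq step) : bool :=
  (\sum_(s <- p) step_dx s == m) && (\sum_(s <- p) step_dy s == n).

(* Each step increases i+j by at least 1, so any path to (m,n) has at most
   m+n steps; we count paths of every length l <= m+n. *)
Definition Delannoy (m n : nat) : nat :=
  \sum_(l < (m + n).+1) #|[set t : l.-tuple step | ends_at m n t]|.

From mathcomp Require Import all_boot all_algebra zify ring.
Set Implicit Arguments. Unset Strict Implicit. Unset Printing Implicit Defensive.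

(* Write a(n) for the alternating antidiagonal sum.  Classifying paths by their
   first step gives D(i+1,j+1) = D(i,j+1) + D(i+1,j) + D(i,j), with D(0,j) = D(i,0) = 1.
   Expanding every interior term of a(n+2) by this recurrence produces three
   alternating sums: two of them are a(n+1) with opposite signs, up to boundary
   terms, and the third is -a(n).  Hence a(n+2) = -a(n), and a(0) = 1, a(1) = 0. *)

Definition npaths l m n : nat := \sum_(t : l.-tuple step) ends_at m n t.

Lemma card_ends_at l m n : #|[set t : l.-tuple step | ends_at m n t]| = npaths l m n.
Proof. by rewrite -sum1_card big_mkcond; apply: eq_bigr => t _; rewrite inE; case: ends_at. Qed.

Lemma step_decodeK : cancel step_decode step_code.
Proof. by move=> [[|[|[|i]]] lt_i3] //; apply: val_inj; rewrite /= inordK. Qed.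

Lemma big_step (F : step -> nat) : \sum_(s : step) F s = F East + F North + F Diag.
Proof.
rewrite (reindex step_decode); last first.
  by exists step_code => s _; [exact: step_decodeK | exact: step_codeK].
by rewrite !big_ord_recl big_ord0 /= addn0 addnA.
Qed.

Lemma big_tupleS l (F : l.+1.-tuple step -> nat) :
  \sum_(t : l.+1.-tuple step) F t = \sum_(s : step) \sum_(t : l.-tuple step) F [tuple of s :: t].
Proof.
rewrite pair_big /= (reindex (fun p : step * l.-tuple step => [tuple of p.1 :: p.2])) //.
exists (fun t : l.+1.-tuple step => (thead t, [tuple of behead t])) => [[s t] _ | t _] /=.
  by congr (_, _); apply: val_inj.
by rewrite -tuple_eta.
Qed.

Lemma ends_at_nil m n : ends_at m n [::] = (m == 0) && (n == 0).
Proof. by rewrite /ends_at !big_nil !(eq_sym 0). Qed.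

Lemma ends_at_cons m n s t : ends_at m n (s :: t) =
  [&& step_dx s <= m, step_dy s <= n & ends_at (m - step_dx s) (n - step_dy s) t].
Proof.
rewrite /ends_at !big_cons.
by case: s m n => [] [|m] [|n]; rewrite /= ?add0n ?add1n ?eqSS ?subSS ?subn0 ?andbF.
Qed.

Lemma npaths0 m n : npaths 0 m n = (m == 0) && (n == 0).
Proof.
rewrite /npaths (eq_bigr (fun=> nat_of_bool (ends_at m n [::]))) => [|t _]; last by rewrite tuple0.
by rewrite sum_nat_const card_tuple mul1n ends_at_nil.
Qed.

Lemma npathsS l m n : npaths l.+1 m n =
  \sum_(s : step) ((step_dx s <= m) && (step_dy s <= n)) * npaths l (m - step_dx s) (n - step_dy s).
Proof.
rewrite /npaths big_tupleS; apply: eq_bigr => s _; rewrite big_distrr.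
by apply: eq_bigr => t _; rewrite /= ends_at_cons andbA mulnb.
Qed.

Lemma npathsSSS l m n : npaths l.+1 m.+1 n.+1 = npaths l m n.+1 + npaths l m.+1 n + npaths l m n.
Proof. by rewrite npathsS big_step /= !subSS !subn0 !mul1n. Qed.

Lemma npaths0n l n : npaths l 0 n = (l == n).
Proof.
elim: l n => [|l IHl] [|n]; rewrite ?npaths0 // npathsS big_step //=.
by rewrite !mul0n mul1n subSS !subn0 addn0 IHl.
Qed.

Lemma npathsm0 l m : npaths l m 0 = (l == m).
Proof.
elim: l m => [|l IHl] [|m]; rewrite ?npaths0 // npathsS big_step //=.
by rewrite !mul0n mul1n subSS !subn0 !addn0 IHl.
Qed.

Lemma ends_at_size m n t : ends_at m n t -> size t <= m + n.
Proof.
case/andP=> /eqP <- /eqP <-; elim: t => [|s t IHt]; rewrite ?big_nil // !big_cons.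
by case: s => /=; lia.
Qed.

Lemma npaths_long l m n : m + n < l -> npaths l m n = 0.
Proof.
move=> lt_mn_l; apply: big1 => t _; case ends_t: (ends_at m n t) => //.
by have := ends_at_size ends_t; rewrite size_tuple; lia.
Qed.

Lemma Delannoy_npaths m n N : m + n < N -> Delannoy m n = \sum_(l < N) npaths l m n.
Proof.
move=> lt_mn_N; rewrite /Delannoy; under eq_bigr do rewrite card_ends_at.
rewrite (big_ord_widen _ (fun l => npaths l m n) lt_mn_N) big_mkcond.
by apply: eq_bigr => l _; case: ifP => // /negbT; rewrite -leqNgt => /npaths_long ->.
Qed.

Lemma Delannoy0n n : Delannoy 0 n = 1.
Proof.
rewrite (@Delannoy_npaths _ _ n.+1) //; under eq_bigr do rewrite npaths0n.
by rewrite big_ord_recr /= eqxx big1 // => l _; rewrite ltn_eqF.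
Qed.

Lemma Delannoym0 m : Delannoy m 0 = 1.
Proof.
rewrite (@Delannoy_npaths _ _ m.+1) ?addn0 //; under eq_bigr do rewrite npathsm0.
by rewrite big_ord_recr /= eqxx big1 // => l _; rewrite ltn_eqF.
Qed.

Lemma DelannoySS m n : Delannoy m.+1 n.+1 = Delannoy m n.+1 + Delannoy m.+1 n + Delannoy m n.
Proof.
rewrite (@Delannoy_npaths _ _ (m + n).+3) ?addnS ?addSn //.
rewrite big_ord_recl npaths0 add0n; under eq_bigr do rewrite npathsSSS.
by rewrite !big_split /= -!Delannoy_npaths ?addnS ?addSn.
Qed.

Lemma even_modn4 n : ~~ odd n -> n %% 4 == 2 = odd n./2.
Proof.
move/negbTE=> even_n; rewrite -{1}(odd_double_half n) even_n add0n -muln2.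
by rewrite -[4]/(2 * 2)%N -muln_modl // modn2; case: odd.
Qed.

Import GRing.Theory.
Local Open Scope ring_scope.

Section AlternatingAntidiagonalSum.

Variables (R : comRingType) (d : nat -> nat -> R).
Hypotheses (d0n : forall n, d 0 n = 1) (dm0 : forall m, d m 0 = 1).
Hypothesis dSS : forall m n, d m.+1 n.+1 = d m n.+1 + d m.+1 n + d m n.

Definition alt_antidiag n := \sum_(k < n.+1) (-1) ^+ k * d (n - k) k.

Lemma alt_antidiagSS n : alt_antidiag n.+2 = - alt_antidiag n.
Proof.
set S1 := \sum_(i < n.+1) (-1) ^+ i * d (n - i) i.+1.
set S2 := \sum_(i < n.+1) (-1) ^+ i * d (n.+1 - i) i.
have S1E : S1 = 1 - alt_antidiag n.+1.
  rewrite /alt_antidiag big_ord_recl subn0 dm0 mulr1 opprD addNKr -sumrN.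
  by apply: eq_bigr => i _; rewrite /bump /= subSS exprS mulN1r mulNr opprK.
have S2E : S2 = alt_antidiag n.+1 - (-1) ^+ n.+1.
  by rewrite /alt_antidiag big_ord_recr /= subnn d0n mulr1 addrK.
rewrite /alt_antidiag big_ord_recl big_ord_recr /bump /= subn0 subSS subnn dm0 d0n !mulr1.
rewrite (eq_bigr (fun i : 'I_n.+1 => - ((-1) ^+ i * d (n - i) i.+1)
   - (-1) ^+ i * d (n.+1 - i) i - (-1) ^+ i * d (n - i) i)) => [|i _]; last first.
  by rewrite subSS (subSn (ltn_ord i : (i <= n)%N)) dSS exprS; ring.
rewrite !big_split /= !sumrN -/S1 -/S2 -/(alt_antidiag n) S1E S2E !exprS; ring.
Qed.

Lemma alt_antidiag_double k : alt_antidiag k.*2 = (-1) ^+ k.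
Proof.
elim: k => [|k IHk]; first by rewrite /alt_antidiag big_ord1 d0n mulr1.
by rewrite doubleS alt_antidiagSS IHk exprS mulN1r.
Qed.

Lemma alt_antidiag_odd k : alt_antidiag k.*2.+1 = 0.
Proof.
elim: k => [|k IHk]; last by rewrite doubleS alt_antidiagSS IHk oppr0.
by rewrite /alt_antidiag !big_ord_recl big_ord0 /= d0n dm0 expr1 mulN1r mulr1 addr0 subrr.
Qed.

Lemma alt_antidiagE n : alt_antidiag n = if odd n then 0 else (-1) ^+ n./2.
Proof.
rewrite -{1}(odd_double_half n).
by case: odd; rewrite ?alt_antidiag_odd ?alt_antidiag_double.
Qed.

End AlternatingAntidiagonalSum.

Theorem corollary5p2 (n : nat) : (0 < n)%N ->
  \sum_(k < n.+1) (-1) ^+ k * (Delannoy (n - k) k)%:Z =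
    (if odd n then 0 else if (n %% 4 == 2)%N then -1 else 1).
Proof.
(* The identity holds for n = 0 as well. *)
move=> _.
have D0n j : (Delannoy 0 j)%:Z = 1 by rewrite Delannoy0n.
have Dm0 i : (Delannoy i 0)%:Z = 1 by rewrite Delannoym0.
have DSS i j : (Delannoy i.+1 j.+1)%:Z =
    (Delannoy i j.+1)%:Z + (Delannoy i.+1 j)%:Z + (Delannoy i j)%:Z.
  by rewrite DelannoySS !PoszD.
rewrite [LHS](alt_antidiagE D0n Dm0 DSS); case: ifP => // /negbT even_n.
by rewrite even_modn4 // -signr_odd; case: odd.
Qed.
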